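(* Let $\mathfrak T_{\rm pr}\subseteq\mathfrak T$ be the ($G_\delta$) set of non-empty pruned normal trees, and let $\le^{\rm pr}_{\boldsymbol\Sigma^1_1},\equiv^{\rm pr}_{\boldsymbol\Sigma^1_1},\not\subseteq^{\rm pr}_{\boldsymbol\Sigma^1_1},\neq^{\rm pr}_{\boldsymbol\Sigma^1_1}$ be the restrictions to $\mathfrak T_{\rm pr}$ of the corresponding relations. Then (i) the pair $(\le^{\rm pr}_{\boldsymbol\Sigma^1_1},\not\subseteq^{\rm pr}_{\boldsymbol\Sigma^1_1})$ is complete for the class $\mathcal C_{\rm qo}$ of analytic quasiorders, and (ii) the pair $(\equiv^{\rm pr}_{\boldsymbol\Sigma^1_1},\neq^{\rm pr}_{\boldsymbol\Sigma^1_1})$ is complete for the class $\mathcal C_{\rm eq}$ of analytic equivalence relations.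
   Context: For finite sequences $s,t\in\omega^{<\omega}$, $s\le t$ means $|s|=|t|$ and $s(i)\le t(i)$ for all $i$; $(s+t)(i)=s(i)+t(i)$. A normal tree on $2\times\omega$ is a set $T$ of pairs $(u,s)\in 2^{<\omega}\times\omega^{<\omega}$ with $|u|=|s|$, containing $(\emptyset,\emptyset)$, closed under initial segments, and such that $(u,s)\in T$, $s\le t$ imply $(u,t)\in T$; $\mathfrak T$ is the space of normal trees (closed in $2^{(2\times\omega)^{<\omega}}$). A tree is pruned if every element has a proper extension in it. $A(T)=\{\alpha\in 2^\omega:\exists\beta\in\omega^\omega\,\forall n\,(\alpha|_n,\beta|_n)\in T\}$. $S\le_{\boldsymbol\Sigma^1_1}T$ iff $\exists\alpha\in\omega^\omega\,\forall(u,s)\in S\,(u,s+\alpha|_{|s|})\in T$; $S\equiv_{\boldsymbol\Sigma^1_1}T$ iff both $S\le_{\boldsymbol\Sigma^1_1} T$ and $T\le_{\boldsymbol\Sigma^1_1} S$; $S\not\subseteq_{\boldsymbol\Sigma^1_1}T$ iff $A(S)\not\subseteq A(T)$; $S\neq_{\boldsymbol\Sigma^1_1}T$ iff $A(S)\neq A(T)$. A Borel homomorphism from a pair $(R_1,R_2)$ of relations on standard Borel $X$ to a pair $(S_1,S_2)$ on $Y$ is a Borel $f:X\to Y$ with $xR_iy\Rightarrow f(x)S_if(y)$ for $i=1,2$. A pair $(R_1,R_2)$ is complete for a class $\mathcal C$ of relations if every $R\in\mathcal C$ admits a Borel homomorphism from $(R,\neg R)$ to $(R_1,R_2)$, and some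 $R\in\mathcal C$ admits a Borel homomorphism from $(R_1,R_2)$ to $(R,\neg R)$. *)

From Stdlib Require Import List Arith.
Import ListNotations.
Set Implicit Arguments.

Definition sigma_algebra {X : Type} (M : (X -> Prop) -> Prop) : Prop :=
  M (fun _ => True) /\
  (forall A, M A -> M (fun x => ~ A x)) /\
  (forall A : nat -> X -> Prop, (forall n, M (A n)) -> M (fun x => exists n, A n x)).

Definition generated {X : Type} (G : (X -> Prop) -> Prop) : (X -> Prop) -> Prop :=
  fun A => forall M, sigma_algebra M -> (forall B, G B -> M B) -> M A.

Record MSpace : Type := MkMSpace {
  carrier :> Type;
  meas : (carrier -> Prop) -> Prop }.

Definition measurable_map (X Y : MSpace) (f : X -> Y) : Prop :=
  forall B, meas Y B -> meas X (fun x => B (f x)).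

Definition prodM (X Y : MSpace) : MSpace :=
  MkMSpace (generated (fun C : X * Y -> Prop =>
     exists A B, meas X A /\ meas Y B /\
       forall p, C p <-> (A (fst p) /\ B (snd p)))).

Definition subM (X : MSpace) (P : X -> Prop) : MSpace :=
  MkMSpace (fun A : {x : X | P x} -> Prop =>
     exists B, meas X B /\ forall y, A y <-> B (proj1_sig y)).

Definition Cantor : MSpace :=
  MkMSpace (generated (fun C : (nat -> bool) -> Prop =>
     exists n b, forall a, C a <-> a n = b)).

Definition Baire : MSpace :=
  MkMSpace (generated (fun C : (nat -> nat) -> Prop =>
     exists n k, forall a, C a <-> a n = k)).

(* A standard Borel space: Borel isomorphic to a Borel subset of 2^omega
   (with the subspace sigma-algebra). *)
Definition standard_borel (X : MSpace) : Prop :=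
  exists f : X -> (nat -> bool),
    (forall x y, f x = f y -> x = y) /\
    measurable_map X Cantor f /\
    meas Cantor (fun a => exists x, f x = a) /\
    (forall A, meas X A -> meas Cantor (fun a => exists x, A x /\ f x = a)).

Definition analytic_rel (X : MSpace) (R : X -> X -> Prop) : Prop :=
  exists B : (X * X) * (nat -> nat) -> Prop,
    meas (prodM (prodM X X) Baire) B /\
    forall x y, R x y <-> exists b, B ((x, y), b).

Definition quasiorder {X : Type} (R : X -> X -> Prop) : Prop :=
  (forall x, R x x) /\ (forall x y z, R x y -> R y z -> R x z).

Definition equivalence_rel {X : Type} (R : X -> X -> Prop) : Prop :=
  (forall x, R x x) /\ (forall x y, R x y -> R y x) /\
  (forall x y z, R x y -> R y z -> R x z).

Definition C_qo (X : MSpace) (R : X -> X -> Prop) : Prop :=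
  standard_borel X /\ analytic_rel X R /\ quasiorder R.

Definition C_eq (X : MSpace) (R : X -> X -> Prop) : Prop :=
  standard_borel X /\ analytic_rel X R /\ equivalence_rel R.

Definition borel_hom (X Y : MSpace) (R1 R2 : X -> X -> Prop)
    (S1 S2 : Y -> Y -> Prop) : Prop :=
  exists f : X -> Y, measurable_map X Y f /\
    (forall x y, R1 x y -> S1 (f x) (f y)) /\
    (forall x y, R2 x y -> S2 (f x) (f y)).

Definition complete_for (C : forall X : MSpace, (X -> X -> Prop) -> Prop)
    (Y : MSpace) (S1 S2 : Y -> Y -> Prop) : Prop :=
  (forall (X : MSpace) (R : X -> X -> Prop), C X R ->
      borel_hom X Y R (fun x y => ~ R x y) S1 S2) /\
  (exists (X : MSpace) (R : X -> X -> Prop), C X R /\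
      borel_hom Y X S1 S2 R (fun x y => ~ R x y)).

(* a tree is (the characteristic function of) a subset of
   2^{<omega} x omega^{<omega}; the space of all such is 2^{(2 x omega)^{<omega}} *)
Definition Tree := (list bool * list nat) -> bool.

(* product (= Borel, the index set being countable) sigma-algebra *)
Definition TreeSpace : MSpace :=
  MkMSpace (generated (fun C : Tree -> Prop =>
     exists p b, forall T, C T <-> T p = b)).

Definition le_seq (s t : list nat) : Prop :=
  length s = length t /\ forall i, i < length s -> nth i s 0 <= nth i t 0.

Definition restr {A : Type} (a : nat -> A) (n : nat) : list A := map a (seq 0 n).

Definition add_restr (s : list nat) (a : nat -> nat) : list nat :=
  map (fun i => nth i s 0 + a i) (seq 0 (length s)).

Definition normal_tree (T : Tree) : Prop :=
  T ([], []) = true /\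
  (forall u s, T (u, s) = true -> length u = length s) /\
  (forall u s n, T (u, s) = true -> T (firstn n u, firstn n s) = true) /\
  (forall u s t, T (u, s) = true -> le_seq s t -> T (u, t) = true).

Definition pruned (T : Tree) : Prop :=
  forall u s, T (u, s) = true ->
    exists u' s', T (u', s') = true /\ length u < length u' /\
      firstn (length u) u' = u /\ firstn (length s) s' = s.

(* non-empty: contains some element (automatic for normal trees) *)
Definition nonempty_tree (T : Tree) : Prop := exists p, T p = true.

Definition Tpr_pred (T : Tree) : Prop :=
  normal_tree T /\ pruned T /\ nonempty_tree T.

Definition Tpr : MSpace := subM TreeSpace Tpr_pred.

Definition A_of (T : Tree) (alpha : nat -> bool) : Prop :=
  exists beta : nat -> nat, forall n, T (restr alpha n, restr beta n) = true.

Definition le_S11 (S T : Tree) : Prop :=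
  exists alpha : nat -> nat, forall u s, S (u, s) = true ->
    T (u, add_restr s alpha) = true.

Definition equiv_S11 (S T : Tree) : Prop := le_S11 S T /\ le_S11 T S.

Definition nsubset_S11 (S T : Tree) : Prop :=
  ~ (forall alpha, A_of S alpha -> A_of T alpha).

Definition neq_S11 (S T : Tree) : Prop :=
  ~ (forall alpha, A_of S alpha <-> A_of T alpha).

Definition le_pr (S T : Tpr) : Prop := le_S11 (proj1_sig S) (proj1_sig T).
Definition equiv_pr (S T : Tpr) : Prop := equiv_S11 (proj1_sig S) (proj1_sig T).
Definition nsubset_pr (S T : Tpr) : Prop := nsubset_S11 (proj1_sig S) (proj1_sig T).
Definition neq_pr (S T : Tpr) : Prop := neq_S11 (proj1_sig S) (proj1_sig T).

(* Let R be an analytic quasiorder on X, Borel-embedded into 2^w by e.  Pushing R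
   forward along e (and adding the diagonal) gives an analytic quasiorder R' on 2^w,
   the projection of a tree C on 2 x 2 x w.  The "chain tree" of C accepts (u, v, s)
   when u and v are linked by a chain of at most s(0) C-steps whose witnesses are
   bounded by s; it is normal, and by Koenig's lemma its branches over v = y|n are
   exactly the z with z R' y.  Interleaving these codes with a row of flags (a true
   flag frees the rest of the branch) makes the tree T_y pruned.  Then x R' y gives
   T_x <= T_y by shifting the witnesses with a chain x -> y, while the code of x lies
   in A(T_x), so A(T_x) <= A(T_y) forces x R' y.  Conversely the relations on pruned
   trees pull back along the Borel coding of trees by 2^w to analytic relations. *)
From Stdlib Require Import List Arith Lia Cantor.
From Stdlib Require Import Classical ClassicalEpsilon FunctionalExtensionality PropExtensionality.
Import ListNotations.

Lemma pred_ext {X} (A B : X -> Prop) : (forall x, A x <-> B x) -> A = B.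
Proof.
  intro H; apply functional_extensionality; intro x.
  apply propositional_extensionality, H.
Qed.

Lemma family_ext {X} (M : (X -> Prop) -> Prop) (A B : X -> Prop) :
  M A -> (forall x, A x <-> B x) -> M B.
Proof. intros HA H; rewrite <- (pred_ext _ _ H); exact HA. Qed.

Definition countable (I : Type) := exists g : I -> nat, forall i j, g i = g j -> i = j.

Section SigmaAlgebra.
Context {X : Type} (M : (X -> Prop) -> Prop) (HM : sigma_algebra M).

Lemma sa_True : M (fun _ => True). Proof. apply HM. Qed.
Lemma sa_compl A : M A -> M (fun x => ~ A x). Proof. apply HM. Qed.
Lemma sa_union (A : nat -> X -> Prop) : (forall n, M (A n)) -> M (fun x => exists n, A n x).
Proof. apply HM. Qed.

Lemma sa_False : M (fun _ => False).
Proof. eapply family_ext; [apply sa_compl, sa_True | simpl; tauto]. Qed.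

Lemma sa_const (P : Prop) : M (fun _ => P).
Proof.
  destruct (classic P) as [H|H].
  - eapply family_ext; [apply sa_True | simpl; tauto].
  - eapply family_ext; [apply sa_False | simpl; tauto].
Qed.

Lemma sa_or A B : M A -> M B -> M (fun x => A x \/ B x).
Proof.
  intros HA HB. eapply family_ext.
  - apply (sa_union (fun n => match n with 0 => A | _ => B end)). intros [|n]; auto.
  - intro x; split.
    + intros [[|n] H]; auto.
    + intros [H|H]; [exists 0|exists 1]; auto.
Qed.

Lemma sa_and A B : M A -> M B -> M (fun x => A x /\ B x).
Proof.
  intros HA HB. eapply family_ext.
  - apply sa_compl, (sa_or (fun x => ~ A x) (fun x => ~ B x)); apply sa_compl; auto.
  - intro x; simpl; tauto.
Qed.

Lemma sa_impl A B : M A -> M B -> M (fun x => A x -> B x).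
Proof.
  intros HA HB. eapply family_ext.
  - apply (sa_or (fun x => ~ A x) B); [apply sa_compl|]; auto.
  - intro x; simpl; tauto.
Qed.

Lemma sa_iff A B : M A -> M B -> M (fun x => A x <-> B x).
Proof.
  intros HA HB. eapply family_ext.
  - apply (sa_and (fun x => A x -> B x) (fun x => B x -> A x)); apply sa_impl; auto.
  - intro x; simpl; tauto.
Qed.

Lemma sa_ex I : countable I ->
  forall A : I -> X -> Prop, (forall i, M (A i)) -> M (fun x => exists i, A i x).
Proof.
  intros [g Hg] A HA. eapply family_ext.
  - apply (sa_union (fun n x => exists i, g i = n /\ A i x)). intro n.
    destruct (classic (exists i, g i = n)) as [[i0 Hi0]|Hn].
    + eapply family_ext; [apply (HA i0)|]. intro x; split; [eauto|].
      intros [i [Hi Hx]]. assert (i = i0) by (apply Hg; congruence). subst; auto.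
    + eapply family_ext; [apply sa_False|]. intro x; split; [tauto|].
      intros [i [Hi _]]; eauto.
  - intro x; split; [intros [n [i [_ H]]] | intros [i H]]; eauto.
Qed.

Lemma sa_all I : countable I ->
  forall A : I -> X -> Prop, (forall i, M (A i)) -> M (fun x => forall i, A i x).
Proof.
  intros Hc A HA. eapply family_ext.
  - apply sa_compl, (sa_ex I Hc). intro i; apply sa_compl, HA.
  - intro x; simpl; split.
    + intros H i; apply NNPP; intro; apply H; eauto.
    + intros H [i Hi]; auto.
Qed.
End SigmaAlgebra.

Lemma generated_sa {X} (G : (X -> Prop) -> Prop) : sigma_algebra (generated G).
Proof.
  split; [|split].
  - intros M HM _; apply HM.
  - intros A HA M HM HG; apply HM, HA; auto.
  - intros A HA M HM HG; apply HM; intro n; apply HA; auto.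
Qed.

Lemma generated_gen {X} (G : (X -> Prop) -> Prop) A : G A -> generated G A.
Proof. intros HA M _ HG; auto. Qed.

Lemma sa_preimage {X Y} (M : (Y -> Prop) -> Prop) (h : Y -> X) : sigma_algebra M ->
  sigma_algebra (fun A : X -> Prop => M (fun y => A (h y))).
Proof. intros [H1 [H2 H3]]; split; [|split]; auto. Qed.

Lemma countable_nat : countable nat. Proof. exists (fun n => n); auto. Qed.

Lemma countable_bool : countable bool.
Proof. exists (fun b : bool => if b then 1 else 0). intros [] []; simpl; congruence. Qed.

Lemma countable_prod A B : countable A -> countable B -> countable (A * B).
Proof.
  intros [g Hg] [h Hh]. exists (fun p => to_nat (g (fst p), h (snd p))).
  intros [a b] [c d] H; cbn [fst snd] in H.
  apply (f_equal of_nat) in H. rewrite !cancel_of_to in H.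
  inversion H. f_equal; auto.
Qed.

Fixpoint list_code {A} (g : A -> nat) (l : list A) : nat :=
  match l with [] => 0 | a :: l => S (to_nat (g a, list_code g l)) end.

Lemma countable_list A : countable A -> countable (list A).
Proof.
  intros [g Hg]. exists (list_code g).
  induction i as [|a i IH]; destruct j as [|b j]; cbn [list_code]; try congruence.
  intro H. apply eq_add_S, (f_equal of_nat) in H. rewrite !cancel_of_to in H.
  inversion H. f_equal; auto.
Qed.

Lemma countable_list_bool : countable (list bool).
Proof. apply countable_list, countable_bool. Qed.
Lemma countable_list_nat : countable (list nat).
Proof. apply countable_list, countable_nat. Qed.
Lemma countable_node : countable (list bool * list nat).
Proof. apply countable_prod; [apply countable_list_bool | apply countable_list_nat]. Qed.

Lemma nth_map_lt {A B} (f : A -> B) l i d d' :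
  i < length l -> nth i (map f l) d = f (nth i l d').
Proof. intro H. rewrite (nth_indep _ d (f d')) by (rewrite length_map; auto). apply map_nth. Qed.

Lemma firstn_app_exact {A} (l l' : list A) : firstn (length l) (l ++ l') = l.
Proof. rewrite <- (Nat.add_0_r (length l)), firstn_app_2. simpl; apply app_nil_r. Qed.

Lemma half_cases n : exists h, n = 2*h \/ n = 2*h+1.
Proof. exists (Nat.div2 n). pose proof (Nat.div2_odd n). destruct (Nat.odd n); simpl in H; lia. Qed.

Lemma two_div2_le n : 2 * Nat.div2 n <= n.
Proof.
  destruct (half_cases n) as [h [-> | ->]];
    [rewrite Nat.div2_double | rewrite Nat.div2_odd']; lia.
Qed.

Lemma finite_bound (f : nat -> nat) N : exists K, forall m, m < N -> f m < K.
Proof.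
  induction N as [|N [K HK]]; [exists 0; intros; lia|].
  exists (max K (S (f N))). intros m Hm.
  destruct (Nat.eq_dec m N); [subst; lia|]. specialize (HK m ltac:(lia)); lia.
Qed.

Section Restriction.
Context {A : Type}.

Lemma length_restr (a : nat -> A) n : length (restr a n) = n.
Proof. unfold restr; rewrite length_map, length_seq; auto. Qed.

Lemma nth_restr (a : nat -> A) n i d : i < n -> nth i (restr a n) d = a i.
Proof.
  intro H; unfold restr.
  rewrite (nth_indep _ d (a 0)) by (rewrite length_map, length_seq; auto).
  rewrite map_nth, seq_nth; auto.
Qed.

Lemma firstn_restr (a : nat -> A) m n : firstn m (restr a n) = restr a (min m n).
Proof.
  apply nth_ext with (d := a 0) (d' := a 0).
  - rewrite length_firstn, !length_restr; auto.
  - intros i Hi. rewrite length_firstn, length_restr in Hi.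
    rewrite nth_firstn. destruct (Nat.ltb_spec i m); [|lia]. rewrite !nth_restr; auto; lia.
Qed.

Lemma restr_S (a : nat -> A) n : restr a (S n) = restr a n ++ [a n].
Proof. unfold restr. rewrite seq_S, map_app; auto. Qed.

Lemma restr_ext (a b : nat -> A) n : (forall i, i < n -> a i = b i) -> restr a n = restr b n.
Proof. intro H; unfold restr; apply map_ext_in; intros i Hi; apply in_seq in Hi; apply H; lia. Qed.

Lemma restr_eq_nth (a : nat -> A) n (l : list A) d :
  restr a n = l <-> (length l = n /\ forall i, i < n -> a i = nth i l d).
Proof.
  split.
  - intros <-. rewrite length_restr; split; auto. intros; rewrite nth_restr; auto.
  - intros [H1 H2]. apply nth_ext with (d := d) (d' := d); rewrite length_restr; auto.
    intros i Hi; rewrite nth_restr by auto; auto.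
Qed.

Lemma restr_agree (a b : nat -> A) n k : restr a n = restr b n -> k < n -> a k = b k.
Proof.
  intros Hab Hk. rewrite <- (nth_restr a n k (a 0)), <- (nth_restr b n k (a 0)) by auto.
  rewrite Hab; auto.
Qed.
End Restriction.

Lemma length_add_restr s a : length (add_restr s a) = length s.
Proof. unfold add_restr; rewrite length_map, length_seq; auto. Qed.

Lemma nth_add_restr s a i : i < length s -> nth i (add_restr s a) 0 = nth i s 0 + a i.
Proof.
  intro H; unfold add_restr. set (f := fun i => nth i s 0 + a i).
  rewrite (nth_indep _ 0 (f 0)) by (rewrite length_map, length_seq; auto).
  rewrite map_nth, seq_nth; auto.
Qed.

Lemma add_restr_nth_eq s a l : length l = length s ->
  (forall i, i < length s -> nth i l 0 = nth i s 0 + a i) -> add_restr s a = l.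
Proof.
  intros H1 H2. apply nth_ext with (d := 0) (d' := 0); rewrite length_add_restr; auto.
  intros i Hi. rewrite nth_add_restr, H2; auto.
Qed.

Lemma add_restr_assoc s a b : add_restr (add_restr s a) b = add_restr s (fun i => a i + b i).
Proof.
  symmetry. apply add_restr_nth_eq; [rewrite !length_add_restr; auto|].
  intros i Hi. rewrite !nth_add_restr by (rewrite ?length_add_restr; auto). lia.
Qed.

Lemma add_restr_restr b a n : add_restr (restr b n) a = restr (fun i => b i + a i) n.
Proof.
  apply add_restr_nth_eq; rewrite !length_restr; auto.
  intros i Hi. rewrite !nth_restr; auto.
Qed.

Lemma add_restr_ext s a b : (forall i, i < length s -> a i = b i) -> add_restr s a = add_restr s b.
Proof.
  intro H. apply add_restr_nth_eq; rewrite ?length_add_restr; auto.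
  intros i Hi. rewrite nth_add_restr, H; auto.
Qed.

Lemma add_restr_snoc s t a : add_restr (s ++ [t]) a = add_restr s a ++ [t + a (length s)].
Proof.
  apply add_restr_nth_eq; [rewrite !length_app, length_add_restr; auto|].
  intros i Hi. rewrite length_app in Hi; simpl in Hi. destruct (Nat.ltb_spec i (length s)).
  - rewrite !app_nth1 by (rewrite ?length_add_restr; lia). apply nth_add_restr; auto.
  - replace i with (length s) by lia. rewrite !nth_middle.
    rewrite <- (length_add_restr s a) at 1. rewrite nth_middle; auto.
Qed.

Lemma le_seq_snoc s t a : le_seq s t -> le_seq (s ++ [a]) (t ++ [a]).
Proof.
  intros [H1 H2]. split; [rewrite !length_app; simpl; lia|].
  intros i Hi. rewrite length_app in Hi; simpl in Hi. destruct (Nat.ltb_spec i (length s)).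
  - rewrite !app_nth1 by lia. auto.
  - rewrite !app_nth2 by lia. replace (i - length t) with (i - length s) by lia. auto.
Qed.

Definition interleave (b g : nat -> nat) (k : nat) : nat :=
  if Nat.even k then b (Nat.div2 k) else g (Nat.div2 k).
Definition evens (d : nat -> nat) i := d (2*i).
Definition odds (d : nat -> nat) i := d (2*i+1).

Lemma interleave_even b g i : interleave b g (2*i) = b i.
Proof. unfold interleave. rewrite Nat.even_even, Nat.div2_double; auto. Qed.
Lemma interleave_odd b g i : interleave b g (2*i+1) = g i.
Proof. unfold interleave. rewrite Nat.even_odd, Nat.div2_odd'; auto. Qed.
Lemma evens_interleave b g : evens (interleave b g) = b.
Proof. apply functional_extensionality; intro; apply interleave_even. Qed.
Lemma odds_interleave b g : odds (interleave b g) = g.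
Proof. apply functional_extensionality; intro; apply interleave_odd. Qed.

Definition spread {A} (d : A) (x : nat -> A) (p : nat) : A :=
  if Nat.even p then d else x (Nat.div2 p).

Lemma spread_even {A} (d : A) x i : spread d x (2*i) = d.
Proof. unfold spread. rewrite Nat.even_even; auto. Qed.
Lemma spread_odd {A} (d : A) x i : spread d x (2*i+1) = x i.
Proof. unfold spread. rewrite Nat.even_odd, Nat.div2_odd'; auto. Qed.

Section OddPart.
Context {A : Type} (d : A).

Definition odd_part (l : list A) (k : nat) : list A := map (fun i => nth (2*i+1) l d) (seq 0 k).

Lemma length_odd_part l k : length (odd_part l k) = k.
Proof. unfold odd_part; rewrite length_map, length_seq; auto. Qed.

Lemma nth_odd_part l k i : i < k -> nth i (odd_part l k) d = nth (2*i+1) l d.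
Proof.
  intro H. unfold odd_part.
  rewrite (nth_map_lt _ _ _ _ 0) by (rewrite length_seq; auto). rewrite seq_nth; auto.
Qed.

Lemma odd_part_S l k : odd_part l (S k) = odd_part l k ++ [nth (2*k+1) l d].
Proof. unfold odd_part; rewrite seq_S, map_app; auto. Qed.

Lemma firstn_odd_part l k m : firstn m (odd_part l k) = odd_part l (min m k).
Proof.
  apply nth_ext with (d := d) (d' := d); [rewrite length_firstn, !length_odd_part; auto|].
  intros i Hi. rewrite length_firstn, length_odd_part in Hi. rewrite nth_firstn.
  destruct (Nat.ltb_spec i m); [|lia]. rewrite !nth_odd_part; auto; lia.
Qed.

Lemma odd_part_ext l l' k :
  (forall i, i < k -> nth (2*i+1) l d = nth (2*i+1) l' d) -> odd_part l k = odd_part l' k.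
Proof. intro H. unfold odd_part. apply map_ext_in. intros i Hi; apply in_seq in Hi; apply H; lia. Qed.

Lemma odd_part_app l l' k : 2*k <= length l -> odd_part (l ++ l') k = odd_part l k.
Proof. intro H. apply odd_part_ext. intros i Hi. rewrite app_nth1; auto; lia. Qed.

Lemma odd_part_firstn l k m : 2*k <= m -> odd_part (firstn m l) k = odd_part l k.
Proof.
  intro H. apply odd_part_ext. intros i Hi.
  rewrite nth_firstn. destruct (Nat.ltb_spec (2*i+1) m); auto; lia.
Qed.

Lemma odd_part_restr f n k : 2*k <= n -> odd_part (restr f n) k = restr (fun i => f (2*i+1)) k.
Proof.
  intro H. unfold odd_part, restr. apply map_ext_in.
  intros i Hi; apply in_seq in Hi. rewrite (nth_restr f n); auto; lia.
Qed.

Lemma odd_part_restr_spread x n k : 2*k <= n -> odd_part (restr (spread d x) n) k = restr x k.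
Proof. intro H. rewrite odd_part_restr by auto. apply restr_ext; intros; apply spread_odd. Qed.
End OddPart.

Lemma odd_part_add_restr s a k : 2*k <= length s ->
  odd_part 0 (add_restr s (spread 0 a)) k = add_restr (odd_part 0 s k) a.
Proof.
  intros H. symmetry; apply add_restr_nth_eq; rewrite !length_odd_part; auto.
  intros i Hi. rewrite !nth_odd_part by auto. rewrite nth_add_restr by lia. rewrite spread_odd; auto.
Qed.

Lemma le_seq_odd_part s t k : le_seq s t -> 2*k <= length s ->
  le_seq (odd_part 0 s k) (odd_part 0 t k).
Proof.
  intros [H1 H2] Hk. split; [rewrite !length_odd_part; auto|].
  intros i Hi. rewrite length_odd_part in Hi. rewrite !nth_odd_part by auto. apply H2; lia.
Qed.

Definition CCB := ((nat -> bool) * (nat -> bool) * (nat -> nat))%type.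

Definition agree_upto N (t t' : CCB) : Prop := forall i, i < N ->
  fst (fst t) i = fst (fst t') i /\ snd (fst t) i = snd (fst t') i /\ snd t i = snd t' i.

Definition closed_ccb (P : CCB -> Prop) : Prop :=
  forall t, (forall N, exists t', agree_upto N t t' /\ P t') -> P t.

Definition clopen_ccb (P : CCB -> Prop) : Prop :=
  exists N, forall t t', agree_upto N t t' -> (P t <-> P t').

Definition closed_ccb_baire (F : CCB * (nat -> nat) -> Prop) : Prop :=
  forall t g, (forall N, exists t' g', agree_upto N t t' /\
                 (forall i, i < N -> g i = g' i) /\ F (t', g')) -> F (t, g).

Definition sigma11 (P : CCB -> Prop) : Prop :=
  exists F, closed_ccb_baire F /\ forall t, P t <-> exists g, F (t, g).

Definition delta11 (P : CCB -> Prop) : Prop := sigma11 P /\ sigma11 (fun t => ~ P t).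

Lemma agree_upto_mono N M t t' : M <= N -> agree_upto N t t' -> agree_upto M t t'.
Proof. intros H1 H2 i Hi; apply H2; lia. Qed.

Lemma sigma11_ext P Q : sigma11 P -> (forall t, P t <-> Q t) -> sigma11 Q.
Proof. intros HP H; rewrite <- (pred_ext _ _ H); auto. Qed.

Lemma closed_sigma11 P : closed_ccb P -> sigma11 P.
Proof.
  intro H. exists (fun x => P (fst x)). split.
  - intros t g Hg. apply H. intro N. destruct (Hg N) as [t' [g' [H1 [_ H3]]]]. eauto.
  - intro t; simpl; split; [intro; exists (fun _ => 0); auto | intros [_ ?]; auto].
Qed.

Lemma clopen_delta11 P : clopen_ccb P -> delta11 P.
Proof.
  intros [N HN]; split; apply closed_sigma11; intros t Ht; destruct (Ht N) as [t' [H1 H2]];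
    specialize (HN _ _ H1); tauto.
Qed.

Lemma sigma11_union (P : nat -> CCB -> Prop) :
  (forall n, sigma11 (P n)) -> sigma11 (fun t => exists n, P n t).
Proof.
  intro H. destruct (choice _ H) as [Fs HF].
  exists (fun x => Fs (snd x 0) (fst x, fun m => snd x (S m))). split.
  - intros t g Hg. simpl. apply (proj1 (HF (g 0))).
    intro N. destruct (Hg (S N)) as [t' [g' [H1 [H2 H3]]]]. simpl in H3.
    rewrite <- (H2 0) in H3 by lia. exists t', (fun m => g' (S m)). split; [|split]; auto.
    + apply agree_upto_mono with (S N); auto.
    + intros i Hi; apply H2; lia.
  - intro t; split.
    + intros [n Hn]. apply (HF n) in Hn. destruct Hn as [g Hg].
      exists (fun m => match m with 0 => n | S m => g m end); simpl; auto.
    + intros [g Hg]. simpl in Hg. exists (g 0). apply (HF (g 0)); eauto.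
Qed.

(* The witness for the n-th set is read off the column [m |-> g <n, m>]. *)
Lemma sigma11_inter (P : nat -> CCB -> Prop) :
  (forall n, sigma11 (P n)) -> sigma11 (fun t => forall n, P n t).
Proof.
  intro H. destruct (choice _ H) as [Fs HF].
  exists (fun x => forall n, Fs n (fst x, fun m => snd x (to_nat (n, m)))). split.
  - intros t g Hg n. simpl. apply (proj1 (HF n)).
    intro N. destruct (finite_bound (fun m => to_nat (n, m)) N) as [K HK].
    destruct (Hg (max N K)) as [t' [g' [H1 [H2 H3]]]].
    exists t', (fun m => g' (to_nat (n, m))). split; [|split].
    + apply agree_upto_mono with (max N K); auto; lia.
    + intros i Hi. apply H2. specialize (HK i Hi); lia.
    + apply (H3 n).
  - intro t; split.
    + intro Hn. destruct (choice _ (fun n => proj1 (proj2 (HF n) t) (Hn n))) as [G HG].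
      exists (fun k => G (fst (of_nat k)) (snd (of_nat k))). intro n. cbn [fst snd].
      enough (Heq : (fun m => G (fst (of_nat (to_nat (n, m)))) (snd (of_nat (to_nat (n, m)))))
                    = G n) by (rewrite Heq; exact (HG n)).
      apply functional_extensionality; intro m; rewrite cancel_of_to; auto.
    + intros [g Hg] n. apply (HF n). eauto.
Qed.

Lemma delta11_sa : sigma_algebra delta11.
Proof.
  split; [|split].
  - apply clopen_delta11. exists 0; intros; tauto.
  - intros A [H1 H2]; split; auto. eapply sigma11_ext; [exact H1|]. intro; simpl; tauto.
  - intros A HA; split.
    + apply sigma11_union; intro n; apply HA.
    + eapply sigma11_ext; [apply (sigma11_inter (fun n t => ~ A n t)); intro n; apply HA|].
      intro t; split; [intros H [n Hn]; apply (H n); auto | intros H n Hn; apply H; eauto].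
Qed.

Lemma delta11_generated {Y} (G : (Y -> Prop) -> Prop) (p : CCB -> Y) :
  (forall B, G B -> delta11 (fun t => B (p t))) ->
  forall A, generated G A -> delta11 (fun t => A (p t)).
Proof. intros HG A HA. apply (HA (fun A => delta11 (fun t => A (p t)))); auto. apply sa_preimage, delta11_sa. Qed.

Lemma delta11_coord1 (A : (nat -> bool) -> Prop) : meas Cantor A -> delta11 (fun t : CCB => A (fst (fst t))).
Proof.
  apply delta11_generated. intros B [n [b Hb]]. apply clopen_delta11.
  exists (S n). intros t t' H. rewrite !Hb. destruct (H n ltac:(lia)) as [-> _]; tauto.
Qed.

Lemma delta11_coord2 (A : (nat -> bool) -> Prop) : meas Cantor A -> delta11 (fun t : CCB => A (snd (fst t))).
Proof.
  apply delta11_generated. intros B [n [b Hb]]. apply clopen_delta11.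
  exists (S n). intros t t' H. rewrite !Hb. destruct (H n ltac:(lia)) as [_ [-> _]]; tauto.
Qed.

Lemma delta11_coord3 (A : (nat -> nat) -> Prop) : meas Baire A -> delta11 (fun t : CCB => A (snd t)).
Proof.
  apply delta11_generated. intros B [n [b Hb]]. apply clopen_delta11.
  exists (S n). intros t t' H. rewrite !Hb. destruct (H n ltac:(lia)) as [_ [_ ->]]; tauto.
Qed.

(* The witness sequence of a Sigma^1_1 set is interleaved with the w^w coordinate:
   the last coordinate of a node of [tree_of_closed F] carries both. *)
Definition tree_of_closed (F : CCB * (nat -> nat) -> Prop) (u v : list bool) (s : list nat) : Prop :=
  length u = length s /\ length v = length s /\
  exists a b d, F ((a, b, evens d), odds d) /\
    restr a (length s) = u /\ restr b (length s) = v /\ restr d (length s) = s.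

Definition prefix_closed3 (C : list bool -> list bool -> list nat -> Prop) : Prop :=
  forall u v s m, C u v s -> C (firstn m u) (firstn m v) (firstn m s).

Definition proj_tree3 (C : list bool -> list bool -> list nat -> Prop) (a b : nat -> bool) : Prop :=
  exists d, forall n, C (restr a n) (restr b n) (restr d n).

Lemma tree_of_closed_prefix F : prefix_closed3 (tree_of_closed F).
Proof.
  intros u v s m [H1 [H2 [a [b [d [H3 [H4 [H5 H6]]]]]]]].
  split; [|split]; [rewrite !length_firstn; congruence .. |].
  exists a, b, d. split; auto. rewrite length_firstn.
  rewrite <- H4, <- H5, <- H6, !firstn_restr. rewrite length_restr in *. auto.
Qed.

Lemma tree_of_closed_proj F a b : closed_ccb_baire F ->
  (exists beta, exists g, F ((a, b, beta), g)) <-> proj_tree3 (tree_of_closed F) a b.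
Proof.
  intro HF. split.
  - intros [beta [g Hg]]. exists (interleave beta g). intro n.
    unfold tree_of_closed. rewrite !length_restr. split; [|split]; auto.
    exists a, b, (interleave beta g). rewrite evens_interleave, odds_interleave. auto.
  - intros [d Hd]. exists (evens d), (odds d). apply HF. intro N.
    destruct (Hd (2*N+2)) as [_ [_ [a' [b' [d' [H1 [H2 [H3 H4]]]]]]]].
    rewrite length_restr in *. exists (a', b', evens d'), (odds d'). split; [|split]; auto.
    + intros i Hi. simpl. unfold evens.
      split; [|split]; symmetry; [apply (restr_agree _ _ _ i H2) | apply (restr_agree _ _ _ i H3)
                                 | apply (restr_agree _ _ _ (2*i) H4)]; lia.
    + intros i Hi. unfold odds. symmetry. apply (restr_agree _ _ _ _ H4). lia.
Qed.

Lemma sigma11_tree P : sigma11 P -> exists C, prefix_closed3 C /\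
  forall a b, (exists beta, P (a, b, beta)) <-> proj_tree3 C a b.
Proof.
  intros [F [HF HP]]. exists (tree_of_closed F). split; [apply tree_of_closed_prefix|].
  intros a b. rewrite <- tree_of_closed_proj by auto.
  split; intros [beta Hb]; exists beta; apply HP; auto.
Qed.

Section Transfer.
Variables (X : MSpace) (e : X -> (nat -> bool)).
Hypothesis e_inj : forall x y, e x = e y -> x = y.
Hypothesis e_ran : meas Cantor (fun a => exists x, e x = a).
Hypothesis e_img : forall A, meas X A -> meas Cantor (fun a => exists x, A x /\ e x = a).

Definition image_ccb (B : X * X * (nat -> nat) -> Prop) (t : CCB) : Prop :=
  exists x y, e x = fst (fst t) /\ e y = snd (fst t) /\ B ((x, y), snd t).

Lemma delta11_range2 :
  delta11 (fun t : CCB => (exists x, e x = fst (fst t)) /\ (exists y, e y = snd (fst t))).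
Proof.
  apply (sa_and _ delta11_sa).
  - apply (delta11_coord1 (fun a => exists x, e x = a)); auto.
  - apply (delta11_coord2 (fun a => exists x, e x = a)); auto.
Qed.

(* Injectivity of [e] is what makes the image of a complement the complement of the
   image within the range. *)
Lemma image_ccb_delta11_sa : sigma_algebra (fun B => delta11 (image_ccb B)).
Proof.
  split; [|split].
  - eapply family_ext; [apply delta11_range2|]. intro t; unfold image_ccb; split.
    + intros [[x Hx] [y Hy]]; eauto.
    + intros [x [y [H1 [H2 _]]]]; eauto.
  - intros A HA. eapply family_ext.
    + apply (sa_and _ delta11_sa); [apply delta11_range2 | apply (sa_compl _ delta11_sa), HA].
    + intro t; unfold image_ccb; split.
      * intros [[[x Hx] [y Hy]] H]. exists x, y. split; [|split]; auto. intro HA'. apply H; eauto.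
      * intros [x [y [H1 [H2 H3]]]]. split; [split; eauto|]. intros [x' [y' [H1' [H2' H3']]]].
        assert (x = x') by (apply e_inj; congruence). assert (y = y') by (apply e_inj; congruence).
        subst; auto.
  - intros A HA. eapply family_ext; [apply (sa_union _ delta11_sa (fun n => image_ccb (A n))); auto|].
    intro t; unfold image_ccb; split.
    + intros [n [x [y [H1 [H2 H3]]]]]; eauto 7.
    + intros [x [y [H1 [H2 [n H3]]]]]; eauto 7.
Qed.

Lemma image_ccb_pair_delta11 A : meas (prodM X X) A -> delta11 (image_ccb (fun q => A (fst q))).
Proof.
  intro HA. apply (HA (fun A => delta11 (image_ccb (fun q => A (fst q))))).
  - apply (sa_preimage _ fst image_ccb_delta11_sa).
  - intros R [A1 [A2 [H1 [H2 H3]]]]. eapply family_ext.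
    + apply (sa_and _ delta11_sa).
      * apply (delta11_coord1 (fun a => exists x, A1 x /\ e x = a)); auto.
      * apply (delta11_coord2 (fun a => exists x, A2 x /\ e x = a)); auto.
    + intro t; unfold image_ccb; split.
      * intros [[x [Hx1 Hx2]] [y [Hy1 Hy2]]]. exists x, y. split; [|split]; auto. apply H3; auto.
      * intros [x [y [Hx [Hy H]]]]. apply H3 in H. destruct H. split; eauto.
Qed.

Lemma image_ccb_delta11 B : meas (prodM (prodM X X) Baire) B -> delta11 (image_ccb B).
Proof.
  intro HB. apply (HB (fun B => delta11 (image_ccb B))); [apply image_ccb_delta11_sa|].
  intros R [A1 [D [H1 [H2 H3]]]]. eapply family_ext.
  - apply (sa_and _ delta11_sa); [apply (image_ccb_pair_delta11 A1 H1) | apply (delta11_coord3 D H2)].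
  - intro t; unfold image_ccb; split.
    + intros [[x [y [Hx [Hy H]]]] HD]. exists x, y. split; [|split]; auto. apply H3; auto.
    + intros [x [y [Hx [Hy H]]]]. apply H3 in H. destruct H. split; eauto 6.
Qed.

Definition pushed_rel (R : X -> X -> Prop) (a b : nat -> bool) : Prop :=
  a = b \/ exists x y, e x = a /\ e y = b /\ R x y.

Lemma pushed_rel_tree R : analytic_rel X R ->
  exists C, prefix_closed3 C /\ forall a b, pushed_rel R a b <-> proj_tree3 C a b.
Proof.
  intros [B [HB HR]].
  assert (HS : sigma11 (fun t : CCB => (forall i, fst (fst t) i = snd (fst t) i) \/ image_ccb B t)).
  { eapply sigma11_ext.
    - apply (sigma11_union (fun n => match n with
                                    | 0 => fun t : CCB => forall i, fst (fst t) i = snd (fst t) i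
                                    | _ => image_ccb B end)).
      intros [|n]; [|apply image_ccb_delta11; auto].
      apply closed_sigma11. intros t Ht i. destruct (Ht (S i)) as [t' [H1 H2]].
      destruct (H1 i ltac:(lia)) as [-> [-> _]]. auto.
    - intro t; split; [intros [[|n] H]; auto | intros [H|H]; [exists 0|exists 1]; auto]. }
  destruct (sigma11_tree _ HS) as [C [HC1 HC3]]. exists C. split; auto.
  intros a b. rewrite <- HC3. unfold pushed_rel, image_ccb. simpl. split.
  - intros [<-|[x [y [H1 [H2 H3]]]]]; [exists (fun _ => 0); left; auto|].
    apply HR in H3. destruct H3 as [beta Hb]. exists beta. right. eauto.
  - intros [beta [H|[x [y [H1 [H2 H3]]]]]]; [left; apply functional_extensionality; auto|].
    right. exists x, y. split; [|split]; auto. apply HR; eauto.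
Qed.

Lemma pushed_rel_refl R a : pushed_rel R a a.
Proof. left; auto. Qed.

Lemma pushed_rel_trans R : quasiorder R ->
  forall a b c, pushed_rel R a b -> pushed_rel R b c -> pushed_rel R a c.
Proof.
  intros [_ HT] a b c [<-|[x [y [H1 [H2 H3]]]]] [<-|[x' [y' [H1' [H2' H3']]]]]; unfold pushed_rel; eauto 7.
  right. exists x, y'. split; [|split]; auto. apply HT with y; auto.
  assert (y = x') by (apply e_inj; congruence). subst; auto.
Qed.

Lemma pushed_rel_image R x y : R x y -> pushed_rel R (e x) (e y).
Proof. intro; right; eauto. Qed.

Lemma pushed_rel_image_inv R x y : quasiorder R -> pushed_rel R (e x) (e y) -> R x y.
Proof.
  intros [HR _] [H|[x' [y' [H1 [H2 H3]]]]].
  - apply e_inj in H; subst; auto.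
  - apply e_inj in H1; apply e_inj in H2; subst; auto.
Qed.
End Transfer.

Lemma list_uniform_bound {A} (L : list A) (P : A -> nat -> Prop) :
  (forall c m m', m <= m' -> P c m -> P c m') -> (forall c, In c L -> exists m, P c m) ->
  exists M, forall c, In c L -> P c M.
Proof.
  intros Hmon. induction L as [|a L IH]; intro H; [exists 0; intros c []|].
  destruct (H a (or_introl eq_refl)) as [m Hm].
  destruct IH as [M HM]; [intros c Hc; apply H; right; auto|].
  exists (max m M). intros c [<-|Hc]; [apply Hmon with m | apply Hmon with M]; auto; lia.
Qed.

Lemma pigeonhole_downward K (Q : nat -> nat -> Prop) :
  (forall k n m, m <= n -> Q k n -> Q k m) -> (forall n, exists k, k <= K /\ Q k n) ->
  exists k, k <= K /\ forall n, Q k n.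
Proof.
  intros Hmon Hall. apply NNPP; intro Hn.
  destruct (list_uniform_bound (seq 0 (S K)) (fun k n => ~ Q k n)) as [N HN].
  - intros k m m' Hm HQ HQ'. apply HQ, (Hmon k m'); auto.
  - intros k Hk. apply in_seq in Hk. apply NNPP; intro H. apply Hn. exists k. split; [lia|].
    intro n; apply NNPP; intro; apply H; eauto.
  - destruct (Hall N) as [k [Hk HQ]]. apply (HN k); auto. apply in_seq; lia.
Qed.

Section Konig.
Context {A : Type} (d : A) (fin : nat -> list A) (Good : list A -> Prop).
Hypothesis Good_prefix : forall l m, Good l -> Good (firstn m l).
Hypothesis Good_fin : forall l c l', Good (l ++ c :: l') -> In c (fin (length l)).

Definition extendable (l : list A) : Prop := forall m, exists l', length l' = m /\ Good (l ++ l').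

Lemma extendable_step l : extendable l -> exists c, extendable (l ++ [c]).
Proof.
  intros Hl. apply NNPP; intro Hn.
  destruct (list_uniform_bound (fin (length l))
              (fun c m => ~ exists l', length l' = m /\ Good ((l ++ [c]) ++ l'))) as [M HM].
  - intros c m m' Hmm' HP [l' [H1 H2]]. apply HP. exists (firstn m l'). split; [rewrite length_firstn; lia|].
    rewrite <- firstn_app_2. apply Good_prefix; auto.
  - intros c _. apply NNPP; intro Hc. apply Hn. exists c. intro m.
    apply NNPP; intro Hm. apply Hc. exists m. exact Hm.
  - destruct (Hl (S M)) as [[|c l''] [H1 H2]]; [simpl in H1; lia|].
    apply (HM c); [eapply Good_fin; eauto|]. exists l''. split; [simpl in H1; lia|].
    rewrite <- app_assoc; auto.
Qed.

Lemma konig : (forall n, exists l, length l = n /\ Good l) ->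
  exists f : nat -> A, forall n, Good (map f (seq 0 n)).
Proof.
  intro Hex.
  assert (Hnx : forall l, exists c, extendable l -> extendable (l ++ [c])).
  { intro l. destruct (classic (extendable l)) as [H|H]; [|exists d; tauto].
    destruct (extendable_step l H) as [c Hc]; eauto. }
  destruct (choice _ Hnx) as [next Hnext].
  set (L := fix L n := match n with 0 => [] | S n => L n ++ [next (L n)] end).
  assert (HL : forall n, extendable (L n)).
  { induction n; [|apply Hnext; auto]. intro m. destruct (Hex m) as [l [H1 H2]]. exists l; auto. }
  exists (fun n => next (L n)). intro n.
  assert (E : map (fun n => next (L n)) (seq 0 n) = L n).
  { induction n; auto. rewrite seq_S, map_app, IHn. auto. }
  rewrite E. destruct (HL n 0) as [[|] [H1 H2]]; [rewrite app_nil_r in H2; auto | simpl in H1; lia].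
Qed.
End Konig.

Fixpoint all_bool_lists (n : nat) : list (list bool) :=
  match n with
  | 0 => [[]]
  | S n => flat_map (fun l => [true :: l; false :: l]) (all_bool_lists n)
  end.

Lemma in_all_bool_lists l : In l (all_bool_lists (length l)).
Proof.
  induction l as [|b l IH]; simpl; auto. apply in_flat_map. exists l; split; auto.
  destruct b; simpl; auto.
Qed.

Fixpoint all_bounded_lists (n B : nat) : list (list nat) :=
  match n with
  | 0 => [[]]
  | S n => flat_map (fun l => map (fun k => k :: l) (seq 0 (S B))) (all_bounded_lists n B)
  end.

Lemma in_all_bounded_lists B l :
  (forall j, j < length l -> nth j l 0 <= B) -> In l (all_bounded_lists (length l) B).
Proof.
  induction l as [|a l IH]; intro H; cbn [length all_bounded_lists]; [left; auto|].
  apply in_flat_map. exists l; split.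
  - apply IH. intros j Hj. apply (H (S j)); simpl; lia.
  - apply in_map_iff. exists a; split; auto. apply in_seq.
    specialize (H 0 ltac:(simpl; lia)). simpl in H; lia.
Qed.

(* A chain z_0, ..., z_k of length k, cut at coordinate i, is the column
   ([z_0 i; ...; z_k i], [g_0 i; ...; g_(k-1) i]) of its points and C-witnesses. *)
Definition column := (list bool * list nat)%type.
Definition column0 : column := ([], []).

Definition column_ok (k : nat) (c : column) (a b : bool) (m : nat) : Prop :=
  length (fst c) = S k /\ length (snd c) = k /\
  nth 0 (fst c) false = a /\ nth k (fst c) false = b /\
  forall j, j < k -> nth j (snd c) 0 <= m.

Definition row_bits (j : nat) (l : list column) : list bool := map (fun c => nth j (fst c) false) l.
Definition row_nats (j : nat) (l : list column) : list nat := map (fun c => nth j (snd c) 0) l.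

Lemma row_bits_firstn j m l : row_bits j (firstn m l) = firstn m (row_bits j l).
Proof. unfold row_bits; rewrite firstn_map; auto. Qed.
Lemma row_nats_firstn j m l : row_nats j (firstn m l) = firstn m (row_nats j l).
Proof. unfold row_nats; rewrite firstn_map; auto. Qed.

Lemma row_bits_ext j j' (l : list column) g n : length l = n ->
  (forall i, i < n -> nth j (fst (g i)) false = nth j' (fst (nth i l column0)) false) ->
  row_bits j (map g (seq 0 n)) = row_bits j' l.
Proof.
  intros H1 H2. apply nth_ext with (d := false) (d' := false).
  - unfold row_bits; rewrite !length_map, length_seq; auto.
  - intros i Hi. unfold row_bits in *. rewrite !length_map, length_seq in Hi. rewrite map_map.
    rewrite (nth_map_lt _ _ _ _ 0) by (rewrite length_seq; auto).
    rewrite (nth_map_lt _ _ _ _ column0) by lia. rewrite seq_nth by auto. apply H2; auto.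
Qed.

Lemma row_nats_ext j j' (l : list column) g n : length l = n ->
  (forall i, i < n -> nth j (snd (g i)) 0 = nth j' (snd (nth i l column0)) 0) ->
  row_nats j (map g (seq 0 n)) = row_nats j' l.
Proof.
  intros H1 H2. apply nth_ext with (d := 0) (d' := 0).
  - unfold row_nats; rewrite !length_map, length_seq; auto.
  - intros i Hi. unfold row_nats in *. rewrite !length_map, length_seq in Hi. rewrite map_map.
    rewrite (nth_map_lt _ _ _ _ 0) by (rewrite length_seq; auto).
    rewrite (nth_map_lt _ _ _ _ column0) by lia. rewrite seq_nth by auto. apply H2; auto.
Qed.

(* The last point of the first chain is the first point of the second, hence [tl]. *)
Definition stack_columns (c1 c2 : column) : column := (fst c1 ++ tl (fst c2), snd c1 ++ snd c2).

Lemma nth_stack_high k1 k2 (b1 b2 : list bool) j : length b1 = S k1 -> length b2 = S k2 ->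
  nth k1 b1 false = nth 0 b2 false -> j <= k2 -> nth (k1 + j) (b1 ++ tl b2) false = nth j b2 false.
Proof.
  intros H1 H2 H3 Hj. destruct j as [|j].
  - rewrite Nat.add_0_r, app_nth1 by lia. auto.
  - rewrite app_nth2 by lia. replace (k1 + S j - length b1) with j by lia.
    destruct b2 as [|x b2]; simpl in *; [lia|]. auto.
Qed.

Lemma column_ok_stack k1 k2 c1 c2 a b w m1 m2 :
  column_ok k1 c1 a b m1 -> column_ok k2 c2 b w m2 ->
  column_ok (k1 + k2) (stack_columns c1 c2) a w (m1 + m2).
Proof.
  intros [A1 [A2 [A3 [A4 A5]]]] [B1 [B2 [B3 [B4 B5]]]].
  unfold column_ok, stack_columns; cbn [fst snd]. split; [|split; [|split; [|split]]].
  - rewrite length_app, A1. destruct (fst c2); simpl in *; lia.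
  - rewrite length_app; lia.
  - rewrite app_nth1 by lia. auto.
  - rewrite nth_stack_high with (k2 := k2) by (auto; congruence). auto.
  - intros j Hj. destruct (Nat.ltb_spec j k1).
    + rewrite app_nth1 by lia. specialize (A5 j H); lia.
    + rewrite app_nth2 by lia. specialize (B5 (j - length (snd c1)) ltac:(lia)). lia.
Qed.

Section ChainTree.
Variable C : list bool -> list bool -> list nat -> Prop.
Hypothesis C_prefix : prefix_closed3 C.

Definition chain_ok k (cols : list column) (u v : list bool) (s : list nat) : Prop :=
  length cols = length s /\
  (forall i, i < length s -> column_ok k (nth i cols column0) (nth i u false) (nth i v false) (nth i s 0)) /\
  (forall j, j < k -> C (row_bits j cols) (row_bits (S j) cols) (row_nats j cols)).

(* Bounding the chain length by s(0) and the witnesses by s makes this tree normal. *)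
Definition chain_tree (u v : list bool) (s : list nat) : Prop :=
  length u = length s /\ length v = length s /\
  exists k, k <= nth 0 s 0 /\ exists cols, chain_ok k cols u v s.

Lemma chain_tree_nil : chain_tree [] [] [].
Proof.
  split; [|split]; auto. exists 0; split; auto. exists [].
  split; [|split]; auto; intros; simpl in *; lia.
Qed.

Lemma chain_tree_prefix u v s m : chain_tree u v s -> chain_tree (firstn m u) (firstn m v) (firstn m s).
Proof.
  intros [H1 [H2 [k [Hk [cols [H3 [H4 H5]]]]]]]. destruct m as [|m]; [apply chain_tree_nil|].
  split; [|split]; [rewrite !length_firstn; lia .. |].
  exists k. split; [rewrite nth_firstn; destruct (Nat.ltb_spec 0 (S m)); [auto|lia]|].
  exists (firstn (S m) cols). split; [|split].
  - rewrite !length_firstn; lia.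
  - intros i Hi. rewrite length_firstn in Hi. rewrite !nth_firstn.
    destruct (Nat.ltb_spec i (S m)); [|lia]. apply H4; lia.
  - intros j Hj. rewrite !row_bits_firstn, row_nats_firstn. apply C_prefix; auto.
Qed.

Lemma chain_tree_normal u v s t : chain_tree u v s -> le_seq s t -> chain_tree u v t.
Proof.
  intros [H1 [H2 [k [Hk [cols [H3 [H4 H5]]]]]]] [Hl Hst].
  split; [|split]; try lia. exists k. split.
  - destruct s as [|a s]; [simpl in Hk; lia|]. specialize (Hst 0 ltac:(simpl; lia)). lia.
  - exists cols. split; [|split]; auto; [lia|].
    intros i Hi. destruct (H4 i ltac:(lia)) as [A1 [A2 [A3 [A4 A5]]]].
    split; [|split; [|split; [|split]]]; auto.
    intros j Hj. specialize (A5 j Hj). specialize (Hst i ltac:(lia)). lia.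
Qed.

Lemma chain_tree_refl u s : length u = length s -> chain_tree u u s.
Proof.
  intro H. split; [|split]; auto. exists 0. split; [lia|].
  exists (map (fun b => ([b], [])) u). split; [|split].
  - rewrite length_map; auto.
  - intros i Hi. rewrite (nth_map_lt _ _ _ _ false) by lia.
    split; [|split; [|split; [|split]]]; simpl; auto. intros; lia.
  - intros; lia.
Qed.

Lemma chain_tree_compose u v w s t : chain_tree u v s -> chain_tree v w t -> length s = length t ->
  chain_tree u w (add_restr s (fun i => nth i t 0)).
Proof.
  intros [H1 [H2 [k1 [Hk1 [c1 [H3 [H4 H5]]]]]]] [H1' [H2' [k2 [Hk2 [c2 [H3' [H4' H5']]]]]]] Hst.
  unfold chain_tree. rewrite length_add_restr. set (n := length s).
  split; [|split]; try lia. exists (k1 + k2). split.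
  { destruct s as [|a s]; [destruct t; [simpl in *; lia | simpl in Hst; lia]|].
    rewrite nth_add_restr by (simpl; lia). lia. }
  exists (map (fun i => stack_columns (nth i c1 column0) (nth i c2 column0)) (seq 0 n)).
  assert (Hrow : forall i, i < n ->
             length (fst (nth i c1 column0)) = S k1 /\ length (fst (nth i c2 column0)) = S k2 /\
             nth k1 (fst (nth i c1 column0)) false = nth 0 (fst (nth i c2 column0)) false /\
             length (snd (nth i c1 column0)) = k1).
  { intros i Hi. destruct (H4 i Hi) as [B1 [B2 [B3 [B4 _]]]].
    destruct (H4' i ltac:(lia)) as [D1 [D2 [D3 [D4 _]]]]. repeat split; auto; congruence. }
  split; [|split].
  - rewrite length_map, length_seq, length_add_restr; auto.
  - intros i Hi. rewrite length_add_restr in Hi.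
    rewrite (nth_map_lt _ _ _ _ 0), seq_nth, nth_add_restr by (rewrite ?length_seq; auto).
    apply column_ok_stack with (b := nth i v false); [apply H4 | apply H4']; lia.
  - intros j Hj. destruct (Nat.ltb_spec j k1).
    + rewrite (row_bits_ext j j c1), (row_bits_ext (S j) (S j) c1), (row_nats_ext j j c1); auto;
        intros i Hi; destruct (Hrow i Hi) as [B1 [_ [_ B2]]]; simpl; rewrite app_nth1; auto; lia.
    + replace j with (k1 + (j - k1)) by lia. replace (S (k1 + (j - k1))) with (k1 + S (j - k1)) by lia.
      rewrite (row_bits_ext _ (j - k1) c2), (row_bits_ext _ (S (j - k1)) c2), (row_nats_ext _ (j - k1) c2);
        try lia; [apply H5'; lia | ..]; intros i Hi; destruct (Hrow i Hi) as [B1 [B2 [B3 B4]]]; simpl.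
      * rewrite app_nth2 by lia. f_equal. lia.
      * apply nth_stack_high with (k2 := k2); auto. lia.
      * apply nth_stack_high with (k2 := k2); auto. lia.
Qed.

(* By the pigeonhole principle one chain length k works at every level, and then
   Koenig's lemma, applied to the finitely branching tree of admissible columns,
   produces an infinite chain. *)
Lemma chain_tree_branch x y beta : (forall n, chain_tree (restr x n) (restr y n) (restr beta n)) ->
  exists k (zs : nat -> nat -> bool) (gs : nat -> nat -> nat), zs 0 = x /\ zs k = y /\
    forall j, j < k -> forall n, C (restr (zs j) n) (restr (zs (S j)) n) (restr (gs j) n).
Proof.
  intro HS.
  set (Good := fun k (l : list column) =>
         (forall i, i < length l -> column_ok k (nth i l column0) (x i) (y i) (beta i)) /\
         forall j, j < k -> C (row_bits j l) (row_bits (S j) l) (row_nats j l)).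
  assert (Good_prefix : forall k l m, Good k l -> Good k (firstn m l)).
  { intros k l m [G1 G2]. split.
    - intros i Hi. rewrite length_firstn in Hi. rewrite nth_firstn.
      destruct (Nat.ltb_spec i m); [|lia]. apply G1; lia.
    - intros j Hj. rewrite !row_bits_firstn, row_nats_firstn. apply C_prefix; auto. }
  destruct (pigeonhole_downward (beta 0) (fun k n => exists l, length l = n /\ Good k l)) as [k [Hk Hall]].
  { intros k n m Hmn [l [H1 H2]]. exists (firstn m l).
    split; [rewrite length_firstn; lia | apply Good_prefix; auto]. }
  { intro n. destruct (HS n) as [_ [_ [k [Hk [cols [H1 [H2 H3]]]]]]]. exists k. split.
    - destruct n; [simpl in Hk; lia|]. rewrite nth_restr in Hk; lia.
    - exists cols. rewrite length_restr in H1. split; [|split]; auto.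
      intros i Hi. specialize (H2 i ltac:(rewrite length_restr; lia)). rewrite !nth_restr in H2 by lia. auto. }
  destruct (konig column0 (fun i => list_prod (all_bool_lists (S k)) (all_bounded_lists k (beta i))) (Good k))
    as [f Hf]; [intros; apply Good_prefix; auto | | apply Hall |].
  - intros l c l' [G1 _]. specialize (G1 (length l) ltac:(rewrite length_app; simpl; lia)).
    rewrite nth_middle in G1. destruct G1 as [A1 [A2 [A3 [A4 A5]]]]. destruct c as [b w]. cbn [fst snd] in *.
    apply in_prod; [rewrite <- A1; apply in_all_bool_lists|].
    rewrite <- A2; apply in_all_bounded_lists. intros; rewrite A2 in *; auto.
  - exists k, (fun j i => nth j (fst (f i)) false), (fun j i => nth j (snd (f i)) 0).
    assert (Hc : forall i, column_ok k (f i) (x i) (y i) (beta i)).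
    { intro i. destruct (Hf (S i)) as [G1 _]. specialize (G1 i ltac:(rewrite length_map, length_seq; lia)).
      rewrite (nth_map_lt _ _ _ _ 0), seq_nth in G1 by (rewrite ?length_seq; lia). auto. }
    split; [|split].
    + apply functional_extensionality; intro i. apply (Hc i).
    + apply functional_extensionality; intro i. apply (Hc i).
    + intros j Hj n. destruct (Hf n) as [_ G2]. specialize (G2 j Hj).
      unfold row_bits, row_nats, restr in *. rewrite !map_map in G2. auto.
Qed.
End ChainTree.

Section LowerTrees.
Variable C : list bool -> list bool -> list nat -> Prop.
Hypothesis C_prefix : prefix_closed3 C.
Variable R : (nat -> bool) -> (nat -> bool) -> Prop.
Hypothesis R_tree : forall a b, R a b <-> proj_tree3 C a b.
Hypothesis R_refl : forall a, R a a.
Hypothesis R_trans : forall a b c, R a b -> R b c -> R a c.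

(* Its projection is {z | z R x}: see [lower_tree_branch] and [lower_tree_shift]. *)
Definition lower_tree (x : nat -> bool) (u : list bool) (s : list nat) : Prop :=
  chain_tree C u (restr x (length u)) s.

Lemma lower_tree_length x u s : lower_tree x u s -> length u = length s.
Proof. intros [H _]; auto. Qed.

Lemma lower_tree_prefix x u s m : lower_tree x u s -> lower_tree x (firstn m u) (firstn m s).
Proof.
  intro H. unfold lower_tree. apply (chain_tree_prefix C C_prefix) with (m := m) in H.
  rewrite firstn_restr in H. rewrite length_firstn. auto.
Qed.

Lemma lower_tree_normal x u s t : lower_tree x u s -> le_seq s t -> lower_tree x u t.
Proof. apply chain_tree_normal. Qed.

Lemma lower_tree_restr x n s : length s = n -> lower_tree x (restr x n) s.
Proof. intro H. unfold lower_tree. rewrite length_restr. apply chain_tree_refl. rewrite length_restr; auto. Qed.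

Lemma lower_tree_branch y z b : (forall n, lower_tree y (restr z n) (restr b n)) -> R z y.
Proof.
  intro H.
  assert (H' : forall n, chain_tree C (restr z n) (restr y n) (restr b n)).
  { intro n. specialize (H n). unfold lower_tree in H. rewrite length_restr in H. auto. }
  destruct (chain_tree_branch C C_prefix z y b H') as [k [zs [gs [H0 [Hk HC]]]]].
  assert (Hchain : forall j, j <= k -> R z (zs j)).
  { induction j; intro Hj; [rewrite H0; auto|].
    apply R_trans with (zs j); [apply IHj; lia|]. apply R_tree. exists (gs j). apply HC; lia. }
  rewrite <- Hk. auto.
Qed.

(* The shift [d + 1] appends the C-step x -> y (witness d) to every chain; the [+ 1]
   pays for the longer chain in the bound s(0). *)
Lemma lower_tree_shift x y : R x y -> exists a, forall u s, lower_tree x u s -> lower_tree y u (add_restr s a).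
Proof.
  intro H. apply R_tree in H. destruct H as [d Hd]. exists (fun i => d i + 1).
  assert (Hxy : forall n, chain_tree C (restr x n) (restr y n) (restr (fun i => d i + 1) n)).
  { intro n. destruct n as [|n]; [apply chain_tree_nil|].
    split; [|split]; try (rewrite !length_restr; auto). exists 1. split; [rewrite nth_restr; lia|].
    exists (map (fun i => ([x i; y i], [d i])) (seq 0 (S n))). split; [|split].
    - rewrite length_map, length_seq, length_restr; auto.
    - intros i Hi. rewrite length_restr in Hi.
      rewrite (nth_map_lt _ _ _ _ 0), seq_nth, !nth_restr by (rewrite ?length_seq; auto).
      unfold column_ok; simpl. split; [|split; [|split; [|split]]]; auto. intros [|j] Hj; simpl; lia.
    - intros j Hj. replace j with 0 by lia. unfold row_bits, row_nats. rewrite !map_map. apply (Hd (S n)). }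
  intros u s Hs. unfold lower_tree in *. pose proof (lower_tree_length _ _ _ Hs) as Hl.
  pose proof (chain_tree_compose C u _ _ s _ Hs (Hxy (length u)) ltac:(rewrite length_restr; auto)) as H.
  rewrite (add_restr_ext s _ (fun i => d i + 1)) in H; auto.
  intros i Hi. rewrite nth_restr; auto. lia.
Qed.

(* The pruned tree below x: odd positions follow [lower_tree x]; even positions are
   flags, and after the first raised flag (at 2j) the rest of the node is free. *)
Definition pruned_lower_tree (x : nat -> bool) (v : list bool) (s : list nat) : Prop :=
  length v = length s /\
  ( ((forall i, 2*i < length v -> nth (2*i) v false = false) /\
     lower_tree x (odd_part false v (Nat.div2 (length v))) (odd_part 0 s (Nat.div2 (length v))) /\
     (Nat.odd (length v) = true -> exists b t,
        lower_tree x (odd_part false v (Nat.div2 (length v)) ++ [b])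
                     (odd_part 0 s (Nat.div2 (length v)) ++ [t])))
  \/ (exists j, 2*j < length v /\ nth (2*j) v false = true /\
        (forall i, i < j -> nth (2*i) v false = false) /\
        lower_tree x (odd_part false v j) (odd_part 0 s j)) ).

Lemma pruned_lower_tree_nil x : pruned_lower_tree x [] [].
Proof.
  split; auto. left. split; [|split].
  - intros i Hi; simpl in Hi; lia.
  - apply chain_tree_nil.
  - simpl; discriminate.
Qed.

Lemma pruned_lower_tree_unflagged x v s k m : length v = length s -> 2*k <= length v ->
  (forall i, i < k -> nth (2*i) v false = false) ->
  lower_tree x (odd_part false v k) (odd_part 0 s k) -> m <= 2*k ->
  pruned_lower_tree x (firstn m v) (firstn m s).
Proof.
  intros H1 H2 H3 H4 H5. unfold pruned_lower_tree. rewrite !firstn_length_le by lia. split; auto. left.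
  split; [|split].
  - intros i Hi. rewrite nth_firstn. destruct (Nat.ltb_spec (2*i) m); [|lia]. apply H3; lia.
  - destruct (half_cases m) as [h [-> | ->]]; [rewrite Nat.div2_double | rewrite Nat.div2_odd'];
      rewrite !odd_part_firstn by lia; replace h with (min h k) by lia;
      rewrite <- !firstn_odd_part; apply lower_tree_prefix; auto.
  - destruct (half_cases m) as [h [-> | ->]]; [rewrite Nat.odd_even; discriminate|].
    intros _. rewrite Nat.div2_odd'.
    exists (nth (2*h+1) v false), (nth (2*h+1) s 0). rewrite !odd_part_firstn by lia.
    rewrite <- !odd_part_S. replace (S h) with (min (S h) k) by lia.
    rewrite <- !firstn_odd_part. apply lower_tree_prefix; auto.
Qed.

Lemma pruned_lower_tree_prefix x v s m :
  pruned_lower_tree x v s -> pruned_lower_tree x (firstn m v) (firstn m s).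
Proof.
  intros [Hl H]. destruct (Nat.le_gt_cases (length v) m) as [Hm|Hm].
  { rewrite !firstn_all2 by lia. split; auto. }
  pose proof (two_div2_le (length v)) as Hdiv.
  destruct H as [[H1 [H2 H3]]|[j [J1 [J2 [J3 J4]]]]].
  - apply pruned_lower_tree_unflagged with (k := Nat.div2 (length v)); auto.
    + intros i Hi. apply H1. lia.
    + destruct (half_cases (length v)) as [h [E|E]]; rewrite E in *;
        [rewrite Nat.div2_double | rewrite Nat.div2_odd']; lia.
  - destruct (Nat.le_gt_cases m (2*j)); [apply pruned_lower_tree_unflagged with (k := j); auto; lia|].
    unfold pruned_lower_tree. rewrite !firstn_length_le by lia. split; auto. right. exists j.
    split; [lia|split; [|split]].
    + rewrite nth_firstn. destruct (Nat.ltb_spec (2*j) m); [auto|lia].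
    + intros i Hi. rewrite nth_firstn. destruct (Nat.ltb_spec (2*i) m); [auto|lia].
    + rewrite !odd_part_firstn by lia. auto.
Qed.

Lemma pruned_lower_tree_normal x v s t : pruned_lower_tree x v s -> le_seq s t -> pruned_lower_tree x v t.
Proof.
  intros [Hl H] Hst. pose proof Hst as [Hst1 _]. split; [lia|].
  pose proof (two_div2_le (length v)) as Hdiv.
  destruct H as [[H1 [H2 H3]]|[j [J1 [J2 [J3 J4]]]]].
  - left. split; [|split]; auto.
    + eapply lower_tree_normal; eauto. apply le_seq_odd_part; auto; lia.
    + intro Ho. destruct (H3 Ho) as [b [t0 Hb]]. exists b, t0. eapply lower_tree_normal; eauto.
      apply le_seq_snoc, le_seq_odd_part; auto; lia.
  - right. exists j. split; [|split; [|split]]; auto.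
    eapply lower_tree_normal; eauto. apply le_seq_odd_part; auto; lia.
Qed.

(* At even length raise a flag; at odd length extend the current node of [lower_tree x];
   once a flag is raised, lower the next one. *)
Lemma pruned_lower_tree_pruned x v s : pruned_lower_tree x v s ->
  exists v' s', pruned_lower_tree x v' s' /\ length v < length v' /\
    firstn (length v) v' = v /\ firstn (length s) s' = s.
Proof.
  intros [Hl H]. destruct H as [[H1 [H2 H3]]|[j [J1 [J2 [J3 J4]]]]].
  - destruct (half_cases (length v)) as [h [E|E]].
    + exists (v ++ [true]), (s ++ [0]).
      split; [|split; [|split]]; [|rewrite length_app; simpl; lia | apply firstn_app_exact ..].
      split; [rewrite !length_app; simpl; lia|]. right. exists h. rewrite length_app; cbn [length].
      split; [lia|split; [|split]].
      * rewrite app_nth2 by lia. replace (2*h - length v) with 0 by lia. auto.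
      * intros i Hi. rewrite app_nth1 by lia. apply H1; lia.
      * rewrite !odd_part_app by lia. rewrite E, Nat.div2_double in H2. auto.
    + rewrite E, Nat.odd_odd in H3. destruct (H3 eq_refl) as [b [t Hb]].
      exists (v ++ [b]), (s ++ [t]).
      split; [|split; [|split]]; [|rewrite length_app; simpl; lia | apply firstn_app_exact ..].
      split; [rewrite !length_app; simpl; lia|]. left. rewrite length_app; cbn [length].
      replace (length v + 1) with (2*(S h)) by lia. rewrite Nat.div2_double. split; [|split].
      * intros i Hi. rewrite app_nth1 by lia. apply H1; lia.
      * rewrite !odd_part_S, !odd_part_app by lia. rewrite Nat.div2_odd' in Hb.
        rewrite !app_nth2 by lia. replace (2*h+1 - length v) with 0 by lia.
        replace (2*h+1 - length s) with 0 by lia. auto.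
      * rewrite Nat.odd_even; discriminate.
  - exists (v ++ [false]), (s ++ [0]).
    split; [|split; [|split]]; [|rewrite length_app; simpl; lia | apply firstn_app_exact ..].
    split; [rewrite !length_app; simpl; lia|]. right. exists j. rewrite length_app; cbn [length].
    split; [lia|split; [|split]].
    + rewrite app_nth1 by lia. auto.
    + intros i Hi. rewrite app_nth1 by lia. auto.
    + rewrite !odd_part_app by lia. auto.
Qed.

Lemma pruned_lower_tree_spread x n : pruned_lower_tree x (restr (spread false x) n) (restr (fun _ => 0) n).
Proof.
  split; [rewrite !length_restr; auto|]. left. rewrite length_restr. split; [|split].
  - intros i Hi. rewrite nth_restr by auto. apply spread_even.
  - rewrite odd_part_restr_spread by apply two_div2_le.
    rewrite odd_part_restr by apply two_div2_le. apply lower_tree_restr, length_restr.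
  - destruct (half_cases n) as [h [E|E]]; rewrite E; [rewrite Nat.odd_even; discriminate|].
    intros _. rewrite Nat.div2_odd'. exists (x h), 0.
    rewrite odd_part_restr_spread, odd_part_restr by lia.
    rewrite <- (restr_S x h), <- (restr_S (fun _ => 0) h). apply lower_tree_restr, length_restr.
Qed.

Lemma pruned_lower_tree_unspread y z b : (forall n, pruned_lower_tree y (restr (spread false z) n) (restr b n)) ->
  forall h, lower_tree y (restr z h) (restr (fun i => b (2*i+1)) h).
Proof.
  intros H h. destruct (H (2*h)) as [_ [[_ [H2 _]]|[j [J1 [J2 _]]]]].
  - rewrite length_restr, Nat.div2_double in H2.
    rewrite odd_part_restr_spread, odd_part_restr in H2 by lia. auto.
  - rewrite length_restr in J1. rewrite nth_restr, spread_even in J2 by auto. discriminate.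
Qed.

Lemma pruned_lower_tree_shift x y a : (forall u s, lower_tree x u s -> lower_tree y u (add_restr s a)) ->
  forall v s, pruned_lower_tree x v s -> pruned_lower_tree y v (add_restr s (spread 0 a)).
Proof.
  intros Ha v s [Hl H]. split; [rewrite length_add_restr; auto|].
  pose proof (two_div2_le (length v)) as Hdiv.
  destruct H as [[H1 [H2 H3]]|[j [J1 [J2 [J3 J4]]]]].
  - left. split; [|split]; auto.
    + rewrite odd_part_add_restr by lia. apply Ha; auto.
    + intro Ho. destruct (H3 Ho) as [b [t Hb]]. exists b, (t + a (Nat.div2 (length v))).
      rewrite odd_part_add_restr by lia. apply Ha in Hb.
      rewrite add_restr_snoc, length_odd_part in Hb. auto.
  - right. exists j. split; [|split; [|split]]; auto. rewrite odd_part_add_restr by lia. apply Ha; auto.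
Qed.
End LowerTrees.

Definition bool_of_prop (P : Prop) : bool := if excluded_middle_informative P then true else false.

Lemma bool_of_prop_true P : bool_of_prop P = true <-> P.
Proof. unfold bool_of_prop. destruct (excluded_middle_informative P); split; auto; discriminate. Qed.

Lemma bool_of_prop_false P : bool_of_prop P = false <-> ~ P.
Proof. unfold bool_of_prop. destruct (excluded_middle_informative P); split; auto; try discriminate; tauto. Qed.

Lemma Cantor_sa : sigma_algebra (meas Cantor). Proof. apply generated_sa. Qed.

Lemma Cantor_cyl n b : meas Cantor (fun a : nat -> bool => a n = b).
Proof. apply generated_gen. exists n, b. intro; tauto. Qed.

Lemma Cantor_restr n l : meas Cantor (fun a : nat -> bool => restr a n = l).
Proof.
  eapply family_ext.
  - apply (sa_and _ Cantor_sa (fun _ => length l = n) (fun a => forall i, i < n -> a i = nth i l false));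
      [apply sa_const, Cantor_sa|].
    apply (sa_all _ Cantor_sa nat countable_nat). intro i.
    apply (sa_impl _ Cantor_sa (fun _ => i < n)); [apply sa_const, Cantor_sa | apply Cantor_cyl].
  - intro a. rewrite (restr_eq_nth a n l false). tauto.
Qed.

Lemma le_S11_trans S T U : le_S11 S T -> le_S11 T U -> le_S11 S U.
Proof. intros [a Ha] [b Hb]. exists (fun i => a i + b i). intros u s H. rewrite <- add_restr_assoc. auto. Qed.

Lemma le_S11_subset S T : le_S11 S T -> forall alpha, A_of S alpha -> A_of T alpha.
Proof.
  intros [a Ha] alpha [b Hb]. exists (fun i => b i + a i). intro n.
  specialize (Ha _ _ (Hb n)). rewrite add_restr_restr in Ha. auto.
Qed.

Definition pruned_tree_at (C : list bool -> list bool -> list nat -> Prop) (x : nat -> bool) : Tree :=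
  fun p => bool_of_prop (pruned_lower_tree C x (fst p) (snd p)).

Section PrunedTrees.
Variable C : list bool -> list bool -> list nat -> Prop.
Hypothesis C_prefix : prefix_closed3 C.

Lemma pruned_tree_at_spec x v s : pruned_tree_at C x (v, s) = true <-> pruned_lower_tree C x v s.
Proof. apply bool_of_prop_true. Qed.

Lemma lower_tree_meas u s : meas Cantor (fun a => lower_tree C a u s).
Proof.
  eapply family_ext.
  - apply (sa_ex _ Cantor_sa (list bool) countable_list_bool
             (fun l a => restr a (length u) = l /\ chain_tree C u l s)). intro l.
    apply (sa_and _ Cantor_sa); [apply Cantor_restr | apply sa_const, Cantor_sa].
  - intro a; unfold lower_tree; split; [intros [l [<- H]]; auto | intro H; eauto].
Qed.

Lemma pruned_lower_tree_meas v s : meas Cantor (fun a => pruned_lower_tree C a v s).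
Proof.
  pose proof Cantor_sa as HS. unfold pruned_lower_tree.
  repeat first
    [ apply lower_tree_meas
    | apply (sa_and _ HS) | apply (sa_or _ HS) | apply (sa_impl _ HS)
    | apply (sa_ex _ HS _ countable_bool); intro
    | apply (sa_ex _ HS _ countable_nat); intro
    | apply (sa_all _ HS _ countable_nat); intro
    | apply (sa_const _ HS) ].
Qed.

Lemma pruned_tree_at_meas (B : Tree -> Prop) : meas TreeSpace B -> meas Cantor (fun a => B (pruned_tree_at C a)).
Proof.
  intro HB. apply (HB (fun B => meas Cantor (fun a => B (pruned_tree_at C a)))).
  - apply (sa_preimage _ (pruned_tree_at C) Cantor_sa).
  - intros B' [p [b Hb]]. eapply family_ext.
    + apply (sa_iff _ Cantor_sa (fun a => pruned_lower_tree C a (fst p) (snd p)) (fun _ => b = true));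
        [apply pruned_lower_tree_meas | apply sa_const, Cantor_sa].
    + intro a. rewrite Hb. unfold pruned_tree_at. destruct b.
      * rewrite bool_of_prop_true. intuition.
      * rewrite bool_of_prop_false. assert (false <> true) by discriminate. tauto.
Qed.

Lemma pruned_tree_at_Tpr x : Tpr_pred (pruned_tree_at C x).
Proof.
  split; [|split].
  - split; [|split; [|split]].
    + apply pruned_tree_at_spec, pruned_lower_tree_nil.
    + intros u s H. apply pruned_tree_at_spec in H. apply H.
    + intros u s n H. apply pruned_tree_at_spec in H. apply pruned_tree_at_spec.
      apply (pruned_lower_tree_prefix C C_prefix); auto.
    + intros u s t H Hst. apply pruned_tree_at_spec in H. apply pruned_tree_at_spec.
      eapply pruned_lower_tree_normal; eauto.
  - intros u s H. apply pruned_tree_at_spec in H.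
    destruct (pruned_lower_tree_pruned C _ _ _ H) as [v' [s' [H1 H2]]].
    exists v', s'. split; auto. apply pruned_tree_at_spec; auto.
  - exists ([], []). apply pruned_tree_at_spec, pruned_lower_tree_nil.
Qed.

Lemma A_pruned_tree_at_spread x : A_of (pruned_tree_at C x) (spread false x).
Proof. exists (fun _ => 0). intro n. apply pruned_tree_at_spec, pruned_lower_tree_spread. Qed.

Variable R : (nat -> bool) -> (nat -> bool) -> Prop.
Hypothesis R_tree : forall a b, R a b <-> proj_tree3 C a b.
Hypothesis R_refl : forall a, R a a.
Hypothesis R_trans : forall a b c, R a b -> R b c -> R a c.

Lemma A_pruned_tree_at_spread_inv y z : A_of (pruned_tree_at C y) (spread false z) -> R z y.
Proof.
  intros [b Hb]. apply (lower_tree_branch C C_prefix R R_tree R_refl R_trans y z (fun i => b (2*i+1))).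
  apply pruned_lower_tree_unspread. intro n. apply pruned_tree_at_spec, Hb.
Qed.

Lemma le_S11_pruned_tree_at x y : R x y -> le_S11 (pruned_tree_at C x) (pruned_tree_at C y).
Proof.
  intro H. destruct (lower_tree_shift C R R_tree x y H) as [a Ha]. exists (spread 0 a).
  intros u s Hs. apply pruned_tree_at_spec in Hs. apply pruned_tree_at_spec.
  apply (pruned_lower_tree_shift C x y a Ha); auto.
Qed.
End PrunedTrees.

Lemma qo_reduces_to_le_pr (X : MSpace) (R : X -> X -> Prop) : C_qo X R ->
  borel_hom X Tpr R (fun x y => ~ R x y) le_pr nsubset_pr.
Proof.
  intros [[e [Hinj [Hmeas [Hran Himg]]]] [Han Hqo]].
  destruct (pushed_rel_tree X e Hinj Hran Himg R Han) as [C [C_prefix C_tree]].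
  exists (fun x => exist Tpr_pred (pruned_tree_at C (e x)) (pruned_tree_at_Tpr C C_prefix (e x))).
  split; [|split].
  - intros B [B' [HB' Hiff]]. eapply family_ext; [apply Hmeas, (pruned_tree_at_meas C B' HB')|].
    intro x. simpl. rewrite Hiff. simpl. tauto.
  - intros x y H. apply (le_S11_pruned_tree_at C (pushed_rel X e R) C_tree).
    apply pushed_rel_image; auto.
  - intros x y H Hs. apply H, (pushed_rel_image_inv X e Hinj); auto.
    apply (A_pruned_tree_at_spread_inv C C_prefix _ C_tree (pushed_rel_refl X e R)
             (pushed_rel_trans X e Hinj R Hqo)).
    apply Hs, A_pruned_tree_at_spread.
Qed.

Lemma eq_reduces_to_equiv_pr (X : MSpace) (R : X -> X -> Prop) : C_eq X R ->
  borel_hom X Tpr R (fun x y => ~ R x y) equiv_pr neq_pr.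
Proof.
  intros [Hsb [Han [Hr [Hs Ht]]]].
  destruct (qo_reduces_to_le_pr X R) as [f [Hf [H1 H2]]]; [split; [|split]; auto; split; eauto|].
  exists f. split; [|split]; auto.
  - intros x y H. split; apply H1; auto.
  - intros x y H Heq. apply (H2 x y H). intros alpha Ha. apply Heq; auto.
Qed.

Definition node_code : list bool * list nat -> nat :=
  proj1_sig (constructive_indefinite_description _ countable_node).

Lemma node_code_inj p q : node_code p = node_code q -> p = q.
Proof. apply (proj2_sig (constructive_indefinite_description _ countable_node)). Qed.

Definition node_decode (n : nat) : list bool * list nat :=
  match excluded_middle_informative (exists p, node_code p = n) with
  | left H => proj1_sig (constructive_indefinite_description _ H)
  | right _ => ([], [])
  end.

Lemma node_decode_code p : node_decode (node_code p) = p.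
Proof.
  unfold node_decode. destruct (excluded_middle_informative _) as [H|H]; [|exfalso; eauto].
  apply node_code_inj, (proj2_sig (constructive_indefinite_description _ H)).
Qed.

Definition tree_of_code (a : nat -> bool) : Tree := fun p => a (node_code p).
Definition code_of_tree (T : Tree) : nat -> bool := fun n => T (node_decode n).

Lemma tree_of_code_of_tree T : tree_of_code (code_of_tree T) = T.
Proof. apply functional_extensionality; intro p. unfold tree_of_code, code_of_tree. rewrite node_decode_code; auto. Qed.

Lemma code_of_tree_inj (S T : Tree) : code_of_tree S = code_of_tree T -> S = T.
Proof. intro H. rewrite <- (tree_of_code_of_tree S), <- (tree_of_code_of_tree T), H; auto. Qed.

Lemma code_of_tree_meas : measurable_map Tpr Cantor (fun S => code_of_tree (proj1_sig S)).
Proof.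
  intros B HB. exists (fun T => B (code_of_tree T)). split; [|intro; tauto].
  apply (HB (fun B => meas TreeSpace (fun T => B (code_of_tree T)))).
  - apply (sa_preimage _ code_of_tree (generated_sa _)).
  - intros B' [n [b Hb]]. eapply family_ext.
    + apply (generated_gen _ (fun T : Tree => T (node_decode n) = b)). exists (node_decode n), b. intro T; tauto.
    + intro T. rewrite Hb. unfold code_of_tree. tauto.
Qed.

Lemma Cantor_standard_borel : standard_borel Cantor.
Proof.
  exists (fun a => a). split; [|split; [|split]]; auto.
  - intros B HB; exact HB.
  - eapply family_ext; [apply (sa_True _ Cantor_sa)|]. intro a; split; eauto.
  - intros A HA. eapply family_ext; [apply HA|]. intro a; split; [eauto | intros [x [Hx <-]]; auto].
Qed.

Definition meas_ccb : (CCB -> Prop) -> Prop := meas (prodM (prodM Cantor Cantor) Baire).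

Lemma meas_ccb_sa : sigma_algebra meas_ccb. Proof. apply generated_sa. Qed.

Lemma meas_ccb_pair (A : (nat -> bool) * (nat -> bool) -> Prop) :
  meas (prodM Cantor Cantor) A -> meas_ccb (fun q => A (fst q)).
Proof.
  intro HA. apply generated_gen. exists A, (fun _ => True).
  split; [|split]; [auto | apply (sa_True _ (generated_sa _)) | intro; tauto].
Qed.

Lemma meas_ccb_witness n k : meas_ccb (fun q => snd q n = k).
Proof.
  apply generated_gen. exists (fun _ => True), (fun b => b n = k). split; [apply (sa_True _ (generated_sa _))|].
  split; [apply generated_gen; exists n, k; intro; tauto | intro; tauto].
Qed.

Lemma meas_pair_fst (A : (nat -> bool) -> Prop) : meas Cantor A -> meas (prodM Cantor Cantor) (fun p => A (fst p)).
Proof.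
  intro HA. apply generated_gen. exists A, (fun _ => True).
  split; [|split]; [auto | apply (sa_True _ Cantor_sa) | intro; tauto].
Qed.

Lemma meas_pair_snd (A : (nat -> bool) -> Prop) : meas Cantor A -> meas (prodM Cantor Cantor) (fun p => A (snd p)).
Proof.
  intro HA. apply generated_gen. exists (fun _ => True), A.
  split; [|split]; [apply (sa_True _ Cantor_sa) | auto | intro; tauto].
Qed.

Lemma meas_ccb_coord1 (A : (nat -> bool) -> Prop) : meas Cantor A -> meas_ccb (fun q => A (fst (fst q))).
Proof. intro HA. apply (meas_ccb_pair (fun p => A (fst p))), meas_pair_fst, HA. Qed.

Lemma meas_ccb_coord2 (A : (nat -> bool) -> Prop) : meas Cantor A -> meas_ccb (fun q => A (snd (fst q))).
Proof. intro HA. apply (meas_ccb_pair (fun p => A (snd p))), meas_pair_snd, HA. Qed.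

Lemma meas_ccb_diag : meas_ccb (fun q => fst (fst q) = snd (fst q)).
Proof.
  eapply family_ext.
  - apply (sa_all _ meas_ccb_sa _ countable_nat (fun n q =>
             (fst (fst q) n = true /\ snd (fst q) n = true) \/ (fst (fst q) n = false /\ snd (fst q) n = false))).
    intro n. apply (sa_or _ meas_ccb_sa); apply (sa_and _ meas_ccb_sa);
      first [ apply (meas_ccb_coord1 (fun a => a n = _)), Cantor_cyl
            | apply (meas_ccb_coord2 (fun a => a n = _)), Cantor_cyl ].
  - intro q. split.
    + intro H. apply functional_extensionality; intro n. destruct (H n) as [[-> ->]|[-> ->]]; auto.
    + intros -> n. destruct (snd (fst q) n); auto.
Qed.

Lemma Tpr_code_meas : meas Cantor (fun a => Tpr_pred (tree_of_code a)).
Proof.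
  pose proof Cantor_sa as HS. unfold Tpr_pred, normal_tree, pruned, nonempty_tree, tree_of_code.
  repeat first
   [ apply (sa_and _ HS) | apply (sa_or _ HS) | apply (sa_impl _ HS)
   | apply (sa_all _ HS _ countable_list_bool); intro
   | apply (sa_all _ HS _ countable_list_nat); intro
   | apply (sa_all _ HS _ countable_nat); intro
   | apply (sa_ex _ HS _ countable_list_bool); intro
   | apply (sa_ex _ HS _ countable_list_nat); intro
   | apply (sa_ex _ HS _ countable_node); intro
   | apply Cantor_cyl
   | apply (sa_const _ HS) ].
Qed.

Definition le_S11_by (S T : Tree) (a : nat -> nat) : Prop :=
  forall u s, S (u, s) = true -> T (u, add_restr s a) = true.

(* Only the first [length s] entries of the shift matter, so the quantifier over shifted
   nodes ranges over a countable set. *)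
Lemma le_S11_by_meas (pa pb : (nat -> bool) * (nat -> bool) -> (nat -> bool)) (h : nat -> nat) :
  (forall n b, meas (prodM Cantor Cantor) (fun p => pa p n = b)) ->
  (forall n b, meas (prodM Cantor Cantor) (fun p => pb p n = b)) ->
  meas_ccb (fun q => le_S11_by (tree_of_code (pa (fst q))) (tree_of_code (pb (fst q))) (fun i => snd q (h i))).
Proof.
  intros Ha Hb. pose proof meas_ccb_sa as HS. unfold le_S11_by, tree_of_code.
  apply (sa_all _ HS _ countable_list_bool); intro u. apply (sa_all _ HS _ countable_list_nat); intro s.
  apply (sa_impl _ HS); [apply (meas_ccb_pair (fun p => pa p (node_code (u, s)) = true)); auto|].
  eapply family_ext.
  - apply (sa_ex _ HS _ countable_list_nat (fun w q => (forall i, i < length s -> snd q (h i) = nth i w 0) /\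
             pb (fst q) (node_code (u, add_restr s (fun i => nth i w 0))) = true)).
    intro w. apply (sa_and _ HS).
    + apply (sa_all _ HS _ countable_nat); intro i. apply (sa_impl _ HS); [apply (sa_const _ HS) | apply meas_ccb_witness].
    + apply (meas_ccb_pair (fun p => pb p _ = true)); auto.
  - intro q. split.
    + intros [w [H1 H2]]. rewrite (add_restr_ext s _ (fun i => nth i w 0)); auto.
    + intro H. exists (restr (fun i => snd q (h i)) (length s)).
      split; [intros i Hi; rewrite nth_restr; auto|].
      rewrite (add_restr_ext s _ (fun i => snd q (h i))); auto. intros i Hi. rewrite nth_restr; auto.
Qed.

Lemma meas_pair_fst_cyl n b : meas (prodM Cantor Cantor) (fun p => fst p n = b).
Proof. apply (meas_pair_fst (fun a => a n = b)), Cantor_cyl. Qed.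
Lemma meas_pair_snd_cyl n b : meas (prodM Cantor Cantor) (fun p => snd p n = b).
Proof. apply (meas_pair_snd (fun a => a n = b)), Cantor_cyl. Qed.

Definition le_code (a b : nat -> bool) : Prop :=
  a = b \/ (Tpr_pred (tree_of_code a) /\ Tpr_pred (tree_of_code b) /\ le_S11 (tree_of_code a) (tree_of_code b)).

Definition equiv_code (a b : nat -> bool) : Prop :=
  a = b \/ (Tpr_pred (tree_of_code a) /\ Tpr_pred (tree_of_code b) /\ equiv_S11 (tree_of_code a) (tree_of_code b)).

Lemma le_code_analytic : analytic_rel Cantor le_code.
Proof.
  exists (fun q => fst (fst q) = snd (fst q) \/
         (Tpr_pred (tree_of_code (fst (fst q))) /\ Tpr_pred (tree_of_code (snd (fst q))) /\
          le_S11_by (tree_of_code (fst (fst q))) (tree_of_code (snd (fst q))) (snd q))). split.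
  - pose proof meas_ccb_sa as HS. apply (sa_or _ HS); [apply meas_ccb_diag|].
    apply (sa_and _ HS); [apply (meas_ccb_coord1 (fun a => Tpr_pred (tree_of_code a))), Tpr_code_meas|].
    apply (sa_and _ HS); [apply (meas_ccb_coord2 (fun a => Tpr_pred (tree_of_code a))), Tpr_code_meas|].
    apply (le_S11_by_meas fst snd (fun i => i)); [apply meas_pair_fst_cyl | apply meas_pair_snd_cyl].
  - intros a b. unfold le_code, le_S11. simpl. split.
    + intros [H|[H1 [H2 [al Hal]]]]; [exists (fun _ => 0); auto | exists al; right; auto].
    + intros [al [H|[H1 [H2 H3]]]]; auto. right; split; [|split]; eauto.
Qed.

Lemma equiv_code_analytic : analytic_rel Cantor equiv_code.
Proof.
  exists (fun q => fst (fst q) = snd (fst q) \/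
         (Tpr_pred (tree_of_code (fst (fst q))) /\ Tpr_pred (tree_of_code (snd (fst q))) /\
          le_S11_by (tree_of_code (fst (fst q))) (tree_of_code (snd (fst q))) (fun i => snd q (2*i)) /\
          le_S11_by (tree_of_code (snd (fst q))) (tree_of_code (fst (fst q))) (fun i => snd q (2*i+1)))). split.
  - pose proof meas_ccb_sa as HS. apply (sa_or _ HS); [apply meas_ccb_diag|].
    apply (sa_and _ HS); [apply (meas_ccb_coord1 (fun a => Tpr_pred (tree_of_code a))), Tpr_code_meas|].
    apply (sa_and _ HS); [apply (meas_ccb_coord2 (fun a => Tpr_pred (tree_of_code a))), Tpr_code_meas|].
    apply (sa_and _ HS).
    + apply (le_S11_by_meas fst snd (fun i => 2*i)); [apply meas_pair_fst_cyl | apply meas_pair_snd_cyl].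
    + apply (le_S11_by_meas snd fst (fun i => 2*i+1)); [apply meas_pair_snd_cyl | apply meas_pair_fst_cyl].
  - intros a b. unfold equiv_code, equiv_S11, le_S11. simpl. split.
    + intros [H|[H1 [H2 [[al Hal] [be Hbe]]]]]; [exists (fun _ => 0); auto|].
      exists (interleave al be). right. split; [|split; [|split]]; auto;
        intros u' s' Hu; [specialize (Hal u' s' Hu) | specialize (Hbe u' s' Hu)];
        [rewrite (add_restr_ext s' _ al) | rewrite (add_restr_ext s' _ be)]; auto;
        intros; [apply interleave_even | apply interleave_odd].
    + intros [al [H|[H1 [H2 [H3 H4]]]]]; auto. right; split; [|split]; auto. split; eexists; eauto.
Qed.

Lemma le_pr_reduces_to_analytic_qo : exists (X : MSpace) (R : X -> X -> Prop), C_qo X R /\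
  borel_hom Tpr X le_pr nsubset_pr R (fun x y => ~ R x y).
Proof.
  exists Cantor, le_code. split; [split; [|split]|].
  - apply Cantor_standard_borel.
  - apply le_code_analytic.
  - split; [intro a; left; auto|].
    intros a b c [<-|[H1 [H2 H3]]] [<-|[H1' [H2' H3']]]; unfold le_code; auto.
    right; split; [|split]; auto. eapply le_S11_trans; eauto.
  - exists (fun S => code_of_tree (proj1_sig S)). split; [apply code_of_tree_meas|split].
    + intros [S HS] [T HT] H. right. unfold le_pr in H; simpl in *. rewrite !tree_of_code_of_tree. auto.
    + intros [S HS] [T HT] H. unfold nsubset_pr, nsubset_S11 in H; simpl in *. intros [E|[_ [_ E]]].
      * apply code_of_tree_inj in E. subst. apply H; auto.
      * rewrite !tree_of_code_of_tree in E. apply H, le_S11_subset; auto.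
Qed.

Lemma equiv_pr_reduces_to_analytic_eq : exists (X : MSpace) (R : X -> X -> Prop), C_eq X R /\
  borel_hom Tpr X equiv_pr neq_pr R (fun x y => ~ R x y).
Proof.
  exists Cantor, equiv_code. split; [split; [|split]|].
  - apply Cantor_standard_borel.
  - apply equiv_code_analytic.
  - split; [|split]; [intro a; left; auto| |].
    + intros a b [<-|[H1 [H2 [H3 H4]]]]; [left; auto | right; split; [|split]; auto; split; auto].
    + intros a b c [<-|[H1 [H2 H3]]] [<-|[H1' [H2' H3']]]; unfold equiv_code; auto.
      right; split; [|split]; auto. destruct H3, H3'. split; eapply le_S11_trans; eauto.
  - exists (fun S => code_of_tree (proj1_sig S)). split; [apply code_of_tree_meas|split].
    + intros [S HS] [T HT] H. right. unfold equiv_pr in H; simpl in *. rewrite !tree_of_code_of_tree. auto.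
    + intros [S HS] [T HT] H. unfold neq_pr, neq_S11 in H; simpl in *. intros [E|[_ [_ [E1 E2]]]].
      * apply code_of_tree_inj in E. subst. apply H; tauto.
      * rewrite !tree_of_code_of_tree in E1, E2. apply H. intro al; split; apply le_S11_subset; auto.
Qed.

Theorem mainTheorem2 :
  complete_for C_qo Tpr le_pr nsubset_pr /\
  complete_for C_eq Tpr equiv_pr neq_pr.
Proof.
  split; split.
  - apply qo_reduces_to_le_pr.
  - apply le_pr_reduces_to_analytic_qo.
  - apply eq_reduces_to_equiv_pr.
  - apply equiv_pr_reduces_to_analytic_eq.
Qed.
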